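(* Let $r\ge 2$, $\alpha=2^r-1$, $\beta=2^{r-1}(2^r-1)$, let $\mathcal{C}\subseteq\mathbb{Z}_2^\alpha\times\mathbb{Z}_4^\beta$ be a $\mathbb{Z}_2\mathbb{Z}_4$-additive 1-perfect code and $D=\mathcal{C}^\perp$, and assume $D$ is $\mathbb{Z}_2\mathbb{Z}_4$-cyclic. Let $\mathbf{z}=(x\mid y)\in D$ with $x\in\mathbb{Z}_2^\alpha$, $y\in\mathbb{Z}_4^\beta$, be a codeword of order 4 (i.e. $2\mathbf{z}\neq 0$). Then $y$ has exactly $2^{2r-2}$ coordinates in $\{1,3\}$, exactly $2^{r-2}(2^{r-1}-1)$ coordinates equal to $2$, and exactly $2^{r-2}(2^{r-1}-1)$ coordinates equal to $0$.
   Context: A $\mathbb{Z}_2\mathbb{Z}_4$-additive code is an additive subgroup of $\mathbb{Z}_2^\alpha\times\mathbb{Z}_4^\beta$; vectors are $(u\mid u')$ with $u\in\mathbb{Z}_2^\alpha$, $u'\in\mathbb{Z}_4^\beta$. The Gray map $\phi:\mathbb{Z}_4\to\mathbb{Z}_2^2$ is $0\mapsto(0,0),1\mapsto(0,1),2\mapsto(1,1),3\mapsto(1,0)$, $\Phi(u\mid u')=(u\mid\phi(u'_1),\dots,\phi(u'_\beta))$. A binary code $C\subseteq\mathbb{Z}_2^n$ is 1-perfect if the Hamming balls of radius 1 around its codewords partition $\mathbb{Z}_2^n$; a $\mathbb{Z}_2\mathbb{Z}_4$-additive code is 1-perfect if its Gray image is. The dual is $\mathcal{C}^\perp=\{\mathbf{v}:\mathbf{u}\cdot\mathbf{v}=0\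 \forall\mathbf{u}\in\mathcal{C}\}$ with $\mathbf{u}\cdot\mathbf{v}=2\sum_{i=1}^\alpha u_iv_i+\sum_{j=1}^\beta u'_jv'_j\in\mathbb{Z}_4$. With $\sigma(v_1,\dots,v_m)=(v_m,v_1,\dots,v_{m-1})$ and $\sigma(u\mid u')=(\sigma(u)\mid\sigma(u'))$, a code is $\mathbb{Z}_2\mathbb{Z}_4$-cyclic if closed under $\sigma$. *)

From HB Require Import structures.
From mathcomp Require Import all_boot all_order all_algebra.
Set Implicit Arguments. Unset Strict Implicit. Unset Printing Implicit Defensive.
Import GRing.Theory.
Local Open Scope ring_scope.

Definition ZZvec (a b : nat) : finType :=
  ({ffun 'I_a -> 'Z_2} * {ffun 'I_b -> 'Z_4})%type.

Definition zzadd a b (u v : ZZvec a b) : ZZvec a b :=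
  ([ffun i => u.1 i + v.1 i], [ffun j => u.2 j + v.2 j]).

Definition zzzero a b : ZZvec a b := ([ffun=> 0], [ffun=> 0]).

(* an additive subgroup (finite, so closure under 0 and + suffices) *)
Definition additive_code a b (C : {set ZZvec a b}) : Prop :=
  zzzero a b \in C /\ forall u v, u \in C -> v \in C -> zzadd u v \in C.

Definition gray4 (x : 'Z_4) : bool * bool :=
  match val x with
  | 0%N => (false, false)
  | 1%N => (false, true)
  | 2%N => (true, true)
  | _ => (true, false)
  end.

(* Gray image: binary word indexed by 'I_a + ('I_b * bool); the second
   component (j, false)/(j, true) is the first/second bit of phi(u'_j). *)
Definition binword (I : finType) := {ffun I -> bool}.

Definition Phi a b (u : ZZvec a b) : binword ('I_a + ('I_b * bool))%type :=
  [ffun k => match k with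
             | inl i => val (u.1 i) == 1%N
             | inr (j, false) => (gray4 (u.2 j)).1
             | inr (j, true) => (gray4 (u.2 j)).2
             end].

Definition hamming (I : finType) (w c : binword I) : nat := #|[set i | w i != c i]|.

Definition perfect1_bin (I : finType) (B : {set binword I}) : Prop :=
  forall w : binword I, exists! c, c \in B /\ (hamming w c <= 1)%N.

Definition perfect1 a b (C : {set ZZvec a b}) : Prop :=
  perfect1_bin [set Phi u | u in C].

Definition lift24 (x : 'Z_2) : 'Z_4 := (val x)%:R.

Definition zzdot a b (u v : ZZvec a b) : 'Z_4 :=
  2%:R * (\sum_(i < a) lift24 (u.1 i) * lift24 (v.1 i))
  + \sum_(j < b) u.2 j * v.2 j.

Definition dual a b (C : {set ZZvec a b}) : {set ZZvec a b} :=
  [set v | [forall u in C, zzdot u v == 0]].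

Definition sigma_vec (T : Type) m (v : {ffun 'I_m -> T}) : {ffun 'I_m -> T} :=
  [ffun i => v (ord_pred i)].

Definition zzsigma a b (u : ZZvec a b) : ZZvec a b :=
  (sigma_vec u.1, sigma_vec u.2).

Definition zzcyclic a b (C : {set ZZvec a b}) : Prop :=
  forall u, u \in C -> zzsigma u \in C.

(* Since C is 1-perfect, every vector is uniquely c + e with c in C and e one of
   the 1 + a + 2b error patterns of Lee weight at most 1, so a property
   invariant under translation by C holds for |C| times as many vectors as
   error patterns.  As z is dual to C and has order 4, w |-> <w, z> is a
   homomorphism onto Z_4 vanishing on C; its fibres have equal size, hence so
   do the sets of error patterns with <e, z> = 0, 1, 2.  The patterns with
   2e in C are 0 and the binary unit vectors; their inner products lie in
   {0, 2}, and translating by 2w with <w, z> = 1 shows that each of 0, 2 is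
   hit (1 + a)/2 times.  The quaternary patterns +-e_j contribute the number
   of j with +-z_j = k, and comparing the fibres over 0, 1 and 2 gives the
   three counts. *)

From mathcomp Require Import all_boot all_order all_algebra zify.

Set Implicit Arguments.
Unset Strict Implicit.
Unset Printing Implicit Defensive.
Import GRing.Theory.
Local Open Scope ring_scope.

Ltac case_Z2 x := case: x => -[|[|?]] //= ?.
Ltac case_Z4 x := case: x => -[|[|[|[|?]]]] //= ?.

Lemma big_option (R : Type) (idx : R) (op : Monoid.com_law idx) (T : finType)
    (F : option T -> R) :
  \big[op/idx]_x F x = op (F None) (\big[op/idx]_t F (Some t)).
Proof.
rewrite (bigD1 None) //= (reindex_omap Some id) => [|[]//].
by congr (op _ _); apply: eq_bigl => t; rewrite eqxx.
Qed.

Lemma card_set_sum (T : finType) (P : pred T) : #|[set x | P x]| = (\sum_x P x)%N.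
Proof. by rewrite -sum1dep_card big_mkcond; apply: eq_bigr => x _; case: (P x). Qed.

Lemma sum_nat_le1 (T : finType) (F : T -> nat) : (\sum_t F t <= 1)%N ->
  (forall t, F t = 0%N) \/ exists2 t, F t = 1%N & forall s, s != t -> F s = 0%N.
Proof.
move=> le1; have [t Ft|F0] := pickP (fun t => F t != 0%N); last first.
  by left=> t; apply/eqP/negbFE/F0.
right; exists t; move: le1; rewrite (bigD1 t) //=.
  by case: (F t) Ft => [|[|]] //; rewrite add1n ltnS leqn0.
case: (F t) Ft => [|[|]] // _; rewrite add1n ltnS leqn0 sum_nat_eq0.
by move=> /forallP F0 s st; apply/eqP; have := F0 s; rewrite st.
Qed.

Section Single.
Variables (I : finType) (R : zmodType).

Definition single (i : I) (x : R) : {ffun I -> R} :=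
  [ffun i' => if i' == i then x else 0].

Lemma singleN i x : single i (- x) = - single i x.
Proof. by apply/ffunP => i'; rewrite !ffunE; case: (i' == i); rewrite ?oppr0. Qed.

Lemma single_eq0 i x : (single i x == 0) = (x == 0).
Proof.
apply/eqP/eqP => [/ffunP/(_ i)|->]; first by rewrite !ffunE eqxx.
by apply/ffunP => i'; rewrite !ffunE if_same.
Qed.

Lemma ffun_single (f : {ffun I -> R}) i :
  (forall i', i' != i -> f i' = 0) -> f = single i (f i).
Proof.
by move=> f0; apply/ffunP => i'; rewrite ffunE; case: eqVneq => [->|/f0].
Qed.

Lemma single_inj i i' x x' : x != 0 -> single i x = single i' x' -> i = i' /\ x = x'.
Proof.
move=> x0 /ffunP /(_ i); rewrite !ffunE eqxx.
by case: eqVneq => [-> //|_ x_eq0]; rewrite x_eq0 eqxx in x0.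
Qed.

Lemma sum_single (F : R -> nat) i x : F 0 = 0%N -> (\sum_i' F (single i x i') = F x)%N.
Proof.
move=> F0; rewrite (bigD1 i) //= big1 ?addn0 ?ffunE ?eqxx // => i' /negbTE i'i.
by rewrite ffunE i'i.
Qed.

End Single.

Definition lee (v : 'Z_4) : nat := if v == 0 then 0 else if v == 2%:R then 2 else 1.

Lemma lee_eq0 (v : 'Z_4) : (lee v == 0%N) = (v == 0).
Proof. by case_Z4 v. Qed.

Lemma lee_eq1 (v : 'Z_4) : lee v = 1%N -> exists s : bool, v = (-1) ^+ s.
Proof.
by case_Z4 v => _; [exists false | exists true]; apply/val_inj.
Qed.

Lemma gray4_inj : injective gray4.
Proof. by move=> x y; case_Z4 x; case_Z4 y; move=> _; apply/val_inj. Qed.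

Lemma gray4_dist (x y : 'Z_4) :
  (((gray4 x).2 != (gray4 y).2) + ((gray4 x).1 != (gray4 y).1))%N = lee (x - y).
Proof. by case_Z4 x; case_Z4 y. Qed.

Section PerfectCode.
Variables a b : nat.
Local Notation V := ({ffun 'I_a -> 'Z_2} * {ffun 'I_b -> 'Z_4})%type.

Definition lee_wt (d : V) : nat := (\sum_i (d.1 i != 0%R) + \sum_j lee (d.2 j))%N.

Lemma hamming_Phi (u v : V) : hamming (Phi u) (Phi v) = lee_wt (u - v).
Proof.
rewrite /hamming card_set_sum big_sumType /lee_wt; congr (_ + _)%N.
  by apply: eq_bigr => i _; rewrite !ffunE; case_Z2 (u.1 i); case_Z2 (v.1 i).
transitivity (\sum_j \sum_s (Phi u (inr (j, s)) != Phi v (inr (j, s)) : nat))%N.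
  by rewrite pair_bigA; apply: eq_bigr => -[].
by apply: eq_bigr => j _; rewrite big_bool !ffunE; apply: gray4_dist.
Qed.

Lemma Phi_inj : injective (@Phi a b).
Proof.
move=> [u2 u4] [v2 v4] /ffunP uv; congr (_, _); apply/ffunP.
  move=> i; have := uv (inl i); rewrite !ffunE /=.
  by case_Z2 (u2 i); case_Z2 (v2 i); move=> _; apply/val_inj.
move=> j; apply: gray4_inj.
have := uv (inr (j, false)); have := uv (inr (j, true)); rewrite !ffunE /=.
by case: (gray4 (u4 j)) (gray4 (v4 j)) => [? ?] [? ?] /= -> ->.
Qed.

Definition error_vec (k : option ('I_a + 'I_b * bool)) : V :=
  match k with
  | None => 0
  | Some (inl i) => (single i 1, 0)
  | Some (inr (j, s)) => (0, single j ((-1) ^+ s))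
  end.
Arguments error_vec k : simpl never.

Lemma lee_wt_error_vec k : (lee_wt (error_vec k) <= 1)%N.
Proof.
rewrite /lee_wt; case: k => [[i|[j s]]|] /=.
- rewrite (sum_single (F := fun x : 'Z_2 => x != 0 : nat)) // big1 // => j _.
  by rewrite ffunE.
- rewrite (sum_single (F := lee)) ?big1 // => [|i _]; first by case: s.
  by rewrite ffunE.
- by rewrite !big1 // => ? _; rewrite ffunE.
Qed.

Lemma lee_wt_le1 d : (lee_wt d <= 1)%N -> exists k, d = error_vec k.
Proof.
case: d => d2 d4; rewrite /lee_wt /= => le1.
have d2_0 i : (d2 i != 0 : nat) = 0%N -> d2 i = 0 by case: eqP.
have d4_0 j : lee (d4 j) = 0%N -> d4 j = 0 by move/eqP; rewrite lee_eq0 => /eqP.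
have [Z2|[i Z2i Z2]] := sum_nat_le1 (leq_trans (leq_addr _ _) le1).
  have -> : d2 = 0 by apply/ffunP => i; rewrite ffunE d2_0.
  rewrite big1 // in le1.
  have [Z4|[j /lee_eq1 [s Z4j] Z4]] := sum_nat_le1 le1.
    by exists None; congr (_, _); apply/ffunP => j; rewrite ffunE d4_0.
  exists (Some (inr (j, s))).
  by rewrite /error_vec (ffun_single (fun j' jj => d4_0 j' (Z4 j' jj))) Z4j.
rewrite (bigD1 i) //= Z2i -addnA add1n ltnS leqn0 addn_eq0 in le1.
case/andP: le1 => _; rewrite sum_nat_eq0 => /forallP Z4.
have -> : d4 = 0 by apply/ffunP => j; rewrite ffunE d4_0 //; apply/eqP/Z4.
have d2i : d2 i = 1 by move: Z2i; case_Z2 (d2 i) => _; apply/val_inj.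
exists (Some (inl i)).
by rewrite /error_vec (ffun_single (fun i' ii => d2_0 i' (Z2 i' ii))) d2i.
Qed.

Lemma error_vec_inj : injective error_vec.
Proof.
have one_neq0 : (1 : 'Z_2) != 0 by [].
have sign_neq0 (s : bool) : (-1) ^+ s != 0 :> 'Z_4 by case: s.
move=> [[i|[j s]]|] [[i'|[j' s']]|] //= e;
  move: (congr1 fst e) (congr1 snd e) => /= e2 e4.
all: try by move/eqP: e2; rewrite ?(eq_sym 0) single_eq0 (negbTE one_neq0).
all: try by move/eqP: e4; rewrite ?(eq_sym 0) single_eq0 (negbTE (sign_neq0 _)).
  by case: (single_inj one_neq0 e2) => ->.
by case: (single_inj (sign_neq0 s) e4) => -> /eqP; case: s s' {e e4} => -[].
Qed.

Lemma mulrn4_eq0 (u : V) : u *+ 4 = 0.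
Proof.
case: u => u2 u4; rewrite !mulrS mulr0n addr0; congr (_, _); apply/ffunP => x.
  by rewrite !ffunE; case_Z2 (u2 x); apply/val_inj.
by rewrite !ffunE; case_Z4 (u4 x); apply/val_inj.
Qed.

Lemma lift24_double (x y : 'Z_2) :
  2%:R * lift24 (x + y) = 2%:R * lift24 x + 2%:R * lift24 y :> 'Z_4.
Proof. by case_Z2 x; case_Z2 y; apply/val_inj. Qed.

Definition dotr (z w : V) : 'Z_4 := zzdot w z.

Lemma dotrD z : {morph dotr z : u v / u + v}.
Proof.
move=> u v; rewrite /dotr /zzdot addrACA; congr (_ + _).
  rewrite !mulr_sumr -big_split; apply: eq_bigr => i _.
  by rewrite ffunE !mulrA lift24_double mulrDl.
by rewrite -big_split; apply: eq_bigr => j _; rewrite ffunE mulrDl.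
Qed.

Lemma dotrMn2 z w : dotr z (w *+ 2) = dotr z w *+ 2.
Proof. by rewrite !mulr2n dotrD. Qed.

Lemma dotr_single4 z j x : dotr z (0, single j x) = x * z.2 j.
Proof.
rewrite /dotr /zzdot big1 ?mulr0 ?add0r => [|i _]; last by rewrite ffunE mul0r.
rewrite (bigD1 j) //= big1 ?addr0 ?ffunE ?eqxx // => j' /negbTE j'j.
by rewrite ffunE j'j mul0r.
Qed.

Variable C : {set ZZvec a b}.
Hypothesis C_additive : additive_code C.
Hypothesis C_perfect : perfect1 C.

Lemma code0 : (0 : V) \in C.
Proof. exact: C_additive.1. Qed.

Lemma codeD (u v : V) : u \in C -> v \in C -> u + v \in C.
Proof. exact: C_additive.2. Qed.

Lemma perfect_decomp (w : V) : exists c k, c \in C /\ w = c + error_vec k.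
Proof.
have [_ [[/imsetP [c Cc ->]] wt_le1] _] := C_perfect (Phi w).
have [k wc] := lee_wt_le1 (leq_trans (eq_leq (esym (hamming_Phi w c))) wt_le1).
by exists c, k; split; rewrite // -wc addrC subrK.
Qed.

Lemma perfect_decomp_uniq (c c' : V) k k' : c \in C -> c' \in C ->
  c + error_vec k = c' + error_vec k' -> c = c' /\ k = k'.
Proof.
move=> Cc Cc' e; have [c0 [_ uniq_c]] := C_perfect (Phi (c + error_vec k)).
have in_ball (d : V) k'' : d \in C -> c + error_vec k = d + error_vec k'' ->
    Phi d \in [set Phi u | u in C] /\
    (hamming (Phi (c + error_vec k)%R) (Phi d) <= 1)%N.
  by move=> Cd ->; rewrite imset_f // hamming_Phi addrC addKr lee_wt_error_vec.
have cc' : c = c'.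
  apply: Phi_inj.
  by rewrite -(uniq_c _ (in_ball _ _ Cc erefl)) (uniq_c _ (in_ball _ _ Cc' e)).
by split => //; apply: error_vec_inj; apply: (addrI c); rewrite e cc'.
Qed.

Lemma card_C_invariant (P : pred V) : (forall c w : V, c \in C -> P (c + w) = P w) ->
  #|[set w | P w]| = (#|C| * #|[set k | P (error_vec k)]|)%N.
Proof.
move=> P_inv; rewrite -cardsX.
have -> : [set w | P w] =
    [set (x.1 : V) + error_vec x.2 | x in setX C [set k | P (error_vec k)]].
  apply/setP => w; rewrite inE; apply/idP/imsetP => [Pw|[[c k]]].
    have [c [k [Cc wE]]] := perfect_decomp w.
    by exists (c, k); rewrite // !inE Cc /= -(P_inv c) // -wE.
  by rewrite inE /= inE => /andP [Cc Pk] ->; rewrite P_inv.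
apply: card_in_imset => -[c k] [c' k'] /setXP [Cc _] /setXP [Cc' _] /= e.
by have [-> ->] := perfect_decomp_uniq Cc Cc' e.
Qed.

Lemma error_vec_double_in_code k :
  (error_vec k *+ 2 \in C) = if k is Some (inr _) then false else true.
Proof.
case: k => [[i|[j s]]|] /=; last by rewrite mul0rn code0.
  have -> : (single i 1, 0) *+ 2 = 0 :> V.
    congr (_, _); apply/ffunP => i'; rewrite !ffunE ?addr0 //.
    by case: (i' == i); apply/val_inj.
  exact: code0.
have opp_e : error_vec (Some (inr (j, ~~ s))) = - error_vec (Some (inr (j, s))).
  change ((0, single j ((-1) ^+ ~~ s)) = (- 0, - single j ((-1) ^+ s)) :> V).
  by rewrite oppr0 -singleN; case: s; rewrite /= ?opprK.
apply/negP => Cee.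
have := @perfect_decomp_uniq _ 0 (Some (inr (j, ~~ s))) (Some (inr (j, s))) Cee code0.
by rewrite opp_e mulr2n addrK add0r => /(_ erefl) [_ [] /eqP]; case: (s).
Qed.

Lemma card_code_gt0 : (0 < #|C|)%N.
Proof. by apply/card_gt0P; exists 0; exact: code0. Qed.

Variable z : V.
Hypothesis z_dual : z \in dual C.
Hypothesis z_order4 : z + z != 0.

Lemma dotr_code c : c \in C -> dotr z c = 0.
Proof.
by move=> Cc; move: z_dual; rewrite inE => /forallP /(_ c); rewrite Cc => /eqP.
Qed.

Lemma dotr_onto1 : exists w, dotr z w = 1.
Proof.
have [j zj_odd] : exists j, z.2 j + z.2 j != 0.
  apply/existsP; apply: contraR z_order4 => /existsPn z2_even.
  apply/eqP; congr (_, _); apply/ffunP => x; rewrite !ffunE.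
    by case_Z2 (z.1 x); apply/val_inj.
  by apply/eqP; rewrite -[_ == _]negbK z2_even.
exists (0, single j ((-1) ^+ (z.2 j != 1))); rewrite dotr_single4.
by move: zj_odd; case_Z4 (z.2 j) => _; apply/val_inj.
Qed.

Definition errors_at k := #|[set x | dotr z (error_vec x) == k]|.

Definition double_errors_at k :=
  #|[set x | (error_vec x *+ 2 \in C) && (dotr z (error_vec x) == k)]|.

Lemma double_in_code_inv (c w : V) : c \in C -> ((c + w) *+ 2 \in C) = (w *+ 2 \in C).
Proof.
move=> Cc; rewrite mulrnDl; apply/idP/idP => [Ccw|]; last exact/codeD/codeD.
have := codeD Ccw (codeD Cc Cc).
by rewrite -mulr2n addrAC -mulrnDr mulrn4_eq0 add0r.
Qed.

Lemma card_dotr_eq k : #|[set w : V | dotr z w == k]| = (#|C| * errors_at k)%N.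
Proof.
apply: (card_C_invariant (P := fun w => dotr z w == k)) => c w Cc.
by rewrite dotrD (dotr_code Cc) add0r.
Qed.

Lemma card_double_dotr_eq k :
  #|[set w : V | (w *+ 2 \in C) && (dotr z w == k)]| = (#|C| * double_errors_at k)%N.
Proof.
apply: (card_C_invariant (P := fun w => (w *+ 2 \in C) && (dotr z w == k))) => c w Cc.
by rewrite double_in_code_inv // dotrD (dotr_code Cc) add0r.
Qed.

Lemma errors_at_shift k : errors_at (k + 1) = errors_at k.
Proof.
have [w1 dotr_w1] := dotr_onto1.
apply/eqP; rewrite -(eqn_pmul2l card_code_gt0) -!card_dotr_eq.
rewrite -(card_preimset _ (addIr w1)); apply/eqP/eq_card => w.
by rewrite !inE dotrD dotr_w1 (inj_eq (addIr 1)).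
Qed.

Lemma double_errors_at_shift k : double_errors_at (k + 2%:R) = double_errors_at k.
Proof.
have [w1 dotr_w1] := dotr_onto1.
apply/eqP; rewrite -(eqn_pmul2l card_code_gt0) -!card_double_dotr_eq.
rewrite -(card_preimset _ (addIr (w1 *+ 2))); apply/eqP/eq_card => w.
rewrite !inE mulrnDl -mulrnA mulrn4_eq0 addr0.
by rewrite dotrD dotrMn2 dotr_w1 (inj_eq (addIr _)).
Qed.

Lemma dotr_double_in_code w : w *+ 2 \in C -> dotr z w *+ 2 = 0.
Proof. by move=> C2w; rewrite -dotrMn2 dotr_code. Qed.

Lemma double_errors_at_odd k : k *+ 2 != 0 -> double_errors_at k = 0%N.
Proof.
move=> k2; rewrite /double_errors_at card_set_sum big1 // => x _.
case C2x: (_ \in C) => //=; apply/eqP; rewrite eqb0.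
by apply: contraNneq k2 => <-; rewrite dotr_double_in_code.
Qed.

Lemma double_errors_total : (double_errors_at 0%R + double_errors_at 2%:R%R = a.+1)%N.
Proof.
rewrite /double_errors_at !card_set_sum -big_split /=.
transitivity (\sum_x (error_vec x *+ 2 \in C) : nat)%N.
  apply: eq_bigr => x _; case C2x: (_ \in C) => //=.
  by move: (dotr_double_in_code C2x); case_Z4 (dotr z (error_vec x)).
rewrite big_option big_sumType /= error_vec_double_in_code.
under eq_bigr do rewrite error_vec_double_in_code.
under [X in (_ + (_ + X))%N]eq_bigr do rewrite error_vec_double_in_code.
by rewrite sum1_card card_ord big1 // addn0.
Qed.

Definition pm_eq (k v : 'Z_4) : nat := (v == k) + (- v == k).

Lemma errors_at_split k :
  errors_at k = (double_errors_at k + \sum_j pm_eq k (z.2 j))%N.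
Proof.
pose C2 x := error_vec x *+ 2 \in C; pose F x := dotr z (error_vec x) == k.
rewrite /errors_at /double_errors_at !card_set_sum.
rewrite (eq_bigr (fun x => C2 x && F x + ~~ C2 x && F x)%N) => [|x _]; last first.
  by rewrite /C2 /F; case: (_ \in C); rewrite /= ?addn0.
rewrite big_split /=; congr (_ + _)%N.
rewrite big_option big_sumType /= /C2 error_vec_double_in_code add0n.
under eq_bigr do rewrite error_vec_double_in_code.
rewrite big1 // add0n.
transitivity (\sum_j \sum_s F (Some (inr (j, s))) : nat)%N.
  rewrite pair_bigA; apply: eq_bigr => -[j s] _.
  by rewrite error_vec_double_in_code.
apply: eq_bigr => j _; rewrite big_bool /F /pm_eq /error_vec !dotr_single4.
by rewrite expr1 mulN1r expr0 mul1r addnC.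
Qed.

Lemma quaternary_value_counts :
  let nodd := #|[set j | (z.2 j == 1) || (z.2 j == 3%:R)]| in
  let ntwo := #|[set j | z.2 j == 2%:R]| in
  let nzero := #|[set j | z.2 j == 0]| in
  [/\ (4 * nodd = a.+1 + 2 * b)%N, (2 * nodd = a.+1 + 4 * ntwo)%N
    & (2 * nodd = a.+1 + 4 * nzero)%N].
Proof.
move=> nodd ntwo nzero.
have odd_sum : (\sum_j pm_eq 1%R (z.2 j) = nodd)%N.
  rewrite /nodd card_set_sum.
  by apply: eq_bigr => j _; rewrite /pm_eq; case_Z4 (z.2 j).
have two_sum : (\sum_j pm_eq 2%:R%R (z.2 j) = 2 * ntwo)%N.
  rewrite /ntwo card_set_sum big_distrr.
  by apply: eq_bigr => j _; rewrite /pm_eq; case_Z4 (z.2 j).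
have zero_sum : (\sum_j pm_eq 0%R (z.2 j) = 2 * nzero)%N.
  rewrite /nzero card_set_sum big_distrr.
  by apply: eq_bigr => j _; rewrite /pm_eq; case_Z4 (z.2 j).
have card_b : (nodd + ntwo + nzero = b)%N.
  rewrite /nodd /ntwo /nzero !card_set_sum -!big_split /= -[RHS]card_ord -sum1_card.
  by apply: eq_bigr => j _; case_Z4 (z.2 j).
have e1 := errors_at_split 1; have e2 := errors_at_split 2%:R.
have e0 := errors_at_split 0.
have s10 : errors_at 1 = errors_at 0 by rewrite -(errors_at_shift 0) add0r.
have s21 : errors_at 2%:R = errors_at 1 by rewrite -(errors_at_shift 1).
have t20 : double_errors_at 2%:R = double_errors_at 0.
  by rewrite -(double_errors_at_shift 0) add0r.
have t1 : double_errors_at 1 = 0%N by apply: double_errors_at_odd.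
have := double_errors_total.
rewrite odd_sum in e1; rewrite two_sum in e2; rewrite zero_sum in e0.
move=> total; split; lia.
Qed.

End PerfectCode.

Theorem corollary3p6 (r : nat) (hr : (2 <= r)%N)
  (C : {set ZZvec (2 ^ r - 1) (2 ^ (r - 1) * (2 ^ r - 1))})
  (hadd : additive_code C) (hperf : perfect1 C)
  (hcyc : zzcyclic (dual C))
  (z : ZZvec (2 ^ r - 1) (2 ^ (r - 1) * (2 ^ r - 1)))
  (hz : z \in dual C) (hord : zzadd z z != zzzero _ _) :
  #|[set j | (z.2 j == 1) || (z.2 j == 3%:R)]| = (2 ^ (2 * r - 2))%N /\
  #|[set j | z.2 j == 2%:R]| = (2 ^ (r - 2) * (2 ^ (r - 1) - 1))%N /\
  #|[set j | z.2 j == 0]| = (2 ^ (r - 2) * (2 ^ (r - 1) - 1))%N.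
Proof.
have [/=] := quaternary_value_counts hadd hperf hz hord.
(* Abstract the counts first: their types mention 2 ^ r, blocking the rewrites. *)
set nodd := #|_|; set ntwo := #|_|; set nzero := #|_|.
have e1 : (2 ^ r = 4 * 2 ^ (r - 2))%N by rewrite -[in LHS](subnK hr) expnD mulnC.
have e2 : (2 ^ (r - 1) = 2 * 2 ^ (r - 2))%N by rewrite -expnS; congr (2 ^ _)%N; lia.
have e3 : (2 ^ (2 * r - 2) = 4 * 2 ^ (r - 2) * 2 ^ (r - 2))%N.
  by rewrite -[4%N]/(2 ^ 2)%N -!expnD; congr (2 ^ _)%N; lia.
rewrite e1 e2 e3; have : (0 < 2 ^ (r - 2))%N by rewrite expn_gt0.
move: (2 ^ (r - 2))%N => p p_gt0 h_odd h_two h_zero.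
by split; [|split]; nia.
Qed.
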